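(* Let $M$ be a realizable point-line configuration of rank $3$ on $[d]$, and let $l$ be a line of $M$ containing exactly three points. Let $N$ be the matroid on $[d]$ whose dependent sets are exactly the subsets $S\subseteq[d]$ such that $|S|\ge4$, or $S\supseteq l$, or $S$ contains two distinct elements of $[d]\setminus l$ (so $N$ has rank $3$, no loops, $\mathcal{C}_2(N)=\{\{i,j\}: i\ne j\in[d]\setminus l\}$ and $\mathcal{C}_3(N)=\{l\}$). Then $V_N\subseteq V_M$.
   Context: A point-line configuration on $[d]$ is a simple matroid of rank at most $3$; its lines are the maximal subsets of size $\ge3$ and rank $2$. $\mathcal{C}_i(N)$ denotes the set of circuits of size $i$ of a matroid $N$. For a matroid $N$ on $[d]$ of rank at most $3$, a realization is a tuple $\gamma=(\gamma_1,\dots,\gamma_d)\in(\mathbb{C}^3)^d\cong\mathbb{C}^{3d}$ such that for all $S\subseteq[d]$, $(\gamma_s)_{s\in S}$ is linearly dependent iff $S$ is dependent in $N$; $\Gamma_N$ is the set of realizations, $N$ is realizable if $\Gamma_N\ne\emptyset$, and $V_N$ is the Zariski closure of $\Gamma_N$ in $\mathbb{C}^{3d}$. *)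

From mathcomp Require Import all_boot all_algebra.
From mathcomp Require Import reals complex mpoly.
Set Implicit Arguments. Unset Strict Implicit. Unset Printing Implicit Defensive.
Import GRing.Theory.
Local Open Scope ring_scope.

Section Matroid.
Variable d : nat.
Implicit Types (I : {set 'I_d} -> bool) (S T : {set 'I_d}).

Definition is_matroid I :=
  [/\ I set0,
      (forall S T, T \subset S -> I S -> I T) &
      (forall S T, I S -> I T -> (#|S| < #|T|)%N ->
         exists2 x, x \in T :\: S & I (x |: S))].

Definition mrank I S : nat :=
  \max_(T : {set 'I_d} | (T \subset S) && I T) #|T|.

Definition simple_matroid I := forall S, (#|S| <= 2)%N -> I S.

Definition pl_config_rank3 I :=
  [/\ is_matroid I, simple_matroid I & mrank I setT = 3%N].

Definition is_line I (L : {set 'I_d}) :=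
  [/\ (3 <= #|L|)%N, mrank I L = 2%N &
      forall L' : {set 'I_d}, L \subset L' -> (3 <= #|L'|)%N -> mrank I L' = 2%N -> L' = L].
End Matroid.

Section Realization.
Variables (K : fieldType) (d : nat).

Definition lin_dep (g : 'I_d -> 'rV[K]_3) (S : {set 'I_d}) : Prop :=
  exists c : 'I_d -> K,
    (exists2 s, s \in S & c s != 0) /\ \sum_(s in S) c s *: g s = 0.

Definition is_realization (dep : {set 'I_d} -> bool) (g : 'I_d -> 'rV[K]_3) :=
  forall S : {set 'I_d}, lin_dep g S <-> dep S.

Definition coords (g : 'I_d -> 'rV[K]_3) : 'I_(d * 3) -> K :=
  fun k => mxvec (\matrix_(i < d, j < 3) g i 0 j) 0 k.

(* V_dep : Zariski closure of the realization space Gamma_dep in K^(3d) *)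
Definition in_VN (dep : {set 'I_d} -> bool) (g : 'I_d -> 'rV[K]_3) : Prop :=
  forall p : {mpoly K[d * 3]},
    (forall h, is_realization dep h -> p.@[coords h] = 0) ->
    p.@[coords g] = 0.
End Realization.

Definition depN (d : nat) (l : {set 'I_d}) (S : {set 'I_d}) : bool :=
  (3 < #|S|)%N || (l \subset S) ||
  [exists i : 'I_d, exists j : 'I_d,
     [&& i != j, i \in S :\: l & j \in S :\: l]].

From mathcomp Require Import all_boot all_algebra.
From mathcomp Require Import reals complex mpoly.
From mathcomp Require Import ring.
Set Implicit Arguments. Unset Strict Implicit. Unset Printing Implicit Defensive.
Import GRing.Theory Num.Theory.
Local Open Scope ring_scope.

(* Write l = {a, b, c} and pick j0 outside l.  In a realization gam of M the
   vectors gam a, gam b, gam j0 form a basis, gam c lies in the span of gam a and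
   gam b, and every gam s with s outside l has a nonzero gam j0-coordinate.  In a
   realization h of N, h a, h b, h j0 are independent, h c lies in the span of
   h a and h b, and every h s with s outside l is a multiple of h j0.  For t != 0
   the linear map sending gam a, gam b, gam j0 to t-multiples of rescaled h a, h b
   and to h j0 carries gam, up to rescaling each vector, onto h + t w for a fixed
   w; so h + t w realizes M.  A polynomial vanishing on the realizations of M then
   vanishes on a punctured line through h, hence at h. *)

Section LinDep.
Variables (K : fieldType) (d : nat).
Implicit Types (g : 'I_d -> 'rV[K]_3) (S : {set 'I_d}).

Lemma lin_dep_mulmx g g' (T : 'M_3) (lam : 'I_d -> K) S :
  T \in unitmx -> (forall s, lam s != 0) ->
  (forall s, g' s = lam s *: (g s *m T)) ->
  lin_dep g' S <-> lin_dep g S.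
Proof.
move=> uT lam0 g'E.
have sumE c : \sum_(s in S) c s *: g' s = (\sum_(s in S) (c s * lam s) *: g s) *m T.
  by rewrite mulmx_suml; apply: eq_bigr => s _; rewrite g'E scalerA scalemxAl.
split=> -[c [[s0 s0S cs0] csum]].
  exists (fun s => c s * lam s); split; first by exists s0; rewrite ?mulf_neq0.
  by move: csum; rewrite sumE => /(congr1 (mulmx^~ (invmx T))); rewrite mulmxK // mul0mx.
exists (fun s => c s / lam s); split; first by exists s0; rewrite ?mulf_neq0 ?invr_eq0.
by rewrite sumE (eq_bigr (fun s => c s *: g s)) ?csum ?mul0mx // => s _; rewrite divfK.
Qed.

Lemma realization_mulmx (dep : {set 'I_d} -> bool) g g' (T : 'M_3) :
  T \in unitmx -> (forall s, exists2 lam, lam != 0 & g' s = lam *: (g s *m T)) ->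
  is_realization dep g -> is_realization dep g'.
Proof.
move=> uT /(fin_all_exists2 (P := fun s lam => lam != 0)) [lam lam0 g'E] g_real S.
by rewrite -g_real; exact: lin_dep_mulmx uT lam0 g'E.
Qed.

Lemma lin_dep_set1 g x : lin_dep g [set x] <-> g x = 0.
Proof.
split=> [[c [[s]]]|gx0]; last first.
  by exists (fun _ => 1); split; [exists x; rewrite ?inE ?oner_neq0 | rewrite big_set1 gx0 scaler0].
rewrite inE => /eqP-> cs0; rewrite big_set1 => /eqP.
by rewrite scaler_eq0 (negPf cs0) => /eqP.
Qed.

Lemma lin_dep_set2 g x y : x != y ->
  lin_dep g [set x; y] <->
  exists cx cy, (cx != 0 \/ cy != 0) /\ cx *: g x + cy *: g y = 0.
Proof.
move=> xy; have sumE (c : 'I_d -> K) :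
    \sum_(s in [set x; y]) c s *: g s = c x *: g x + c y *: g y.
  by rewrite big_setU1 ?big_set1 ?inE.
split=> [[c [[s sxy cs0] csum]]|[cx [cy [c0 csum]]]].
  exists (c x), (c y); split; last by rewrite -sumE.
  by move: sxy; rewrite !inE => /orP[]/eqP sE; [left|right]; rewrite -sE.
exists (fun s => if s == x then cx else cy).
split; last by rewrite sumE eqxx eq_sym (negPf xy).
have yx : y != x by rewrite eq_sym.
by case: c0 => c0; [exists x | exists y]; rewrite ?inE ?eqxx ?orbT ?(negPf yx).
Qed.

Lemma lin_dep_set3 g x y z : x != y -> x != z -> y != z ->
  lin_dep g [set x; y; z] <->
  exists cx cy cz, (cx != 0 \/ cy != 0 \/ cz != 0) /\
     cx *: g x + cy *: g y + cz *: g z = 0.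
Proof.
move=> xy xz yz.
have sumE (c : 'I_d -> K) : \sum_(s in [set x; y; z]) c s *: g s =
    c x *: g x + c y *: g y + c z *: g z.
  rewrite -setUA big_setU1 /=; last by rewrite !inE negb_or xy xz.
  by rewrite big_setU1 ?big_set1 ?inE // addrA.
rewrite eq_sym in xy; rewrite eq_sym in xz; rewrite eq_sym in yz.
split=> [[c [[s sxyz cs0] csum]]|[cx [cy [cz [c0 csum]]]]].
  exists (c x), (c y), (c z); split; last by rewrite -sumE.
  by move: sxyz; rewrite !inE -orbA => /or3P[]/eqP sE; [left|right; left|right; right];
    rewrite -sE.
exists (fun s => if s == x then cx else if s == y then cy else cz).
split; last by rewrite sumE eqxx (negPf xy) eqxx (negPf xz) (negPf yz).
case: c0 => [c0|[c0|c0]]; [exists x | exists y | exists z];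
  by rewrite ?inE ?eqxx ?orbT ?(negPf xy) ?(negPf xz) ?(negPf yz).
Qed.

Lemma lin_indep_set3 g x y z : x != y -> x != z -> y != z ->
  ~ lin_dep g [set x; y; z] ->
  forall cx cy cz, cx *: g x + cy *: g y + cz *: g z = 0 ->
    [/\ cx = 0, cy = 0 & cz = 0].
Proof.
move=> xy xz yz gind cx cy cz csum.
have c0 : ~ (cx != 0 \/ cy != 0 \/ cz != 0).
  by move=> c0; apply: gind; apply/lin_dep_set3 => //; exists cx, cy, cz.
by split; apply/eqP; apply: contra_notT c0; tauto.
Qed.

Lemma lin_dep_set3_comb g a b c : a != b -> a != c -> b != c ->
  lin_dep g [set a; b; c] ->
  ~ lin_dep g [set a; b] -> ~ lin_dep g [set a; c] -> ~ lin_dep g [set b; c] ->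
  exists al be, [/\ al != 0, be != 0 & g c = al *: g a + be *: g b].
Proof.
move=> ab ac bc /lin_dep_set3 [] // ca [cb [cc [c0 csum]]] abind acind bcind.
have cc0 : cc != 0.
  apply: contra_notN abind => /eqP cc0; apply/lin_dep_set2 => //; exists ca, cb; split.
    by case: c0 => [|[|]]; [left|right|rewrite cc0 eqxx].
  by move: csum; rewrite cc0 scale0r addr0.
have ca0 : ca != 0.
  apply: contra_notN bcind => /eqP ca0; apply/lin_dep_set2 => //; exists cb, cc.
  by move: csum; rewrite ca0 scale0r add0r; split; first right.
have cb0 : cb != 0.
  apply: contra_notN acind => /eqP cb0; apply/lin_dep_set2 => //; exists ca, cc.
  by move: csum; rewrite cb0 scale0r addr0; split; first right.
exists (- ca / cc), (- cb / cc); split; rewrite ?mulf_neq0 ?oppr_eq0 ?invr_eq0 //.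
apply: (scalerI cc0); rewrite scalerDr !scalerA ![cc * _]mulrC !divfK // !scaleNr.
by apply/eqP; rewrite -subr_eq0 opprB opprK addrC (addrC (cb *: g b)) csum.
Qed.

Lemma lin_dep_set2_scale g x y : x != y -> g x != 0 -> g y != 0 ->
  lin_dep g [set x; y] -> exists2 mu, mu != 0 & g x = mu *: g y.
Proof.
move=> xy gx0 gy0 /lin_dep_set2 [] // cx [cy [c0 csum]].
have cx0 : cx != 0.
  apply/eqP => cx0; move: csum; rewrite cx0 scale0r add0r => /eqP.
  rewrite scaler_eq0 (negPf gy0) orbF => /eqP cy0.
  by case: c0; rewrite ?cx0 ?cy0 eqxx.
have cy0 : cy != 0.
  apply/eqP => cy0; move: csum; rewrite cy0 scale0r addr0 => /eqP.
  by rewrite scaler_eq0 (negPf cx0) (negPf gx0).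
exists (- cy / cx); first by rewrite mulf_neq0 ?oppr_eq0 ?invr_eq0.
apply: (scalerI cx0); rewrite scalerA mulrC divfK // scaleNr.
by apply/eqP; rewrite -addr_eq0 csum.
Qed.

Lemma realization_set3_comb (dep : {set 'I_d} -> bool) g a b c :
  is_realization dep g -> a != b -> a != c -> b != c ->
  dep [set a; b; c] -> ~~ dep [set a; b] -> ~~ dep [set a; c] -> ~~ dep [set b; c] ->
  exists al be, [/\ al != 0, be != 0 & g c = al *: g a + be *: g b].
Proof.
move=> g_real ab ac bc abc /negP ab_ind /negP ac_ind /negP bc_ind.
by apply: lin_dep_set3_comb => //; [apply/g_real | move/g_real..].
Qed.
End LinDep.

Section Matrix3.
Variable K : fieldType.
Implicit Types (u v w : 'rV[K]_3) (x y z : K).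

Definition mx3 u v w : 'M[K]_3 := \matrix_(i, j) [:: u; v; w]`_i 0 j.
Definition rv3 x y z : 'rV[K]_3 := \row_j [:: x; y; z]`_j.

Lemma mul_rv3_mx3 x y z u v w : rv3 x y z *m mx3 u v w = x *: u + y *: v + z *: w.
Proof.
have rowE (i : 'I_3) : row i (mx3 u v w) = [:: u; v; w]`_i.
  by apply/rowP => j; rewrite !mxE.
by rewrite mulmx_sum_row !big_ord_recl big_ord0 addr0 addrA !rowE !mxE.
Qed.

Lemma rv3E (e : 'rV[K]_3) : e = rv3 (e 0 0) (e 0 1) (e 0 2).
Proof.
by apply/rowP => -[[|[|[|j]]] lt_j3] //=; rewrite mxE //=; congr (e 0 _); apply: val_inj.
Qed.

Lemma mx3_unit u v w :
  (forall x y z, x *: u + y *: v + z *: w = 0 -> [/\ x = 0, y = 0 & z = 0]) ->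
  mx3 u v w \in unitmx.
Proof.
move=> uvw_indep; rewrite unitmxE unitfE; apply/det0P => -[e + eB].
move: eB; rewrite [e]rv3E mul_rv3_mx3 => /uvw_indep [-> -> ->].
by move=> /eqP; apply; apply/rowP => -[[|[|[|j]]] ?]; rewrite !mxE.
Qed.

Lemma mx3_coord u v w (e : 'rV[K]_3) : mx3 u v w \in unitmx ->
  let k := e *m invmx (mx3 u v w) in e = k 0 0 *: u + k 0 1 *: v + k 0 2 *: w.
Proof. by move=> uB /=; rewrite -mul_rv3_mx3 -rv3E mulmxKV. Qed.

Lemma mx3_basis_map u1 u2 u3 v1 v2 v3 x y z : mx3 u1 u2 u3 \in unitmx ->
  (x *: u1 + y *: u2 + z *: u3) *m (invmx (mx3 u1 u2 u3) *m mx3 v1 v2 v3) =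
  x *: v1 + y *: v2 + z *: v3.
Proof. by move=> uB; rewrite -!mul_rv3_mx3 mulmxA mulmxK. Qed.

Lemma lin_indep_mx3_unit d (g : 'I_d -> 'rV[K]_3) (x y z : 'I_d) :
  x != y -> x != z -> y != z -> ~ lin_dep g [set x; y; z] ->
  mx3 (g x) (g y) (g z) \in unitmx.
Proof. by move=> xy xz yz g_ind; apply/mx3_unit/lin_indep_set3. Qed.
End Matrix3.

Lemma meval_line_eq0 (K : numDomainType) (n : nat) (p : {mpoly K[n]}) (A B : 'I_n -> K) :
  (forall t : K, t != 0 -> p.@[fun k => A k + t * B k] = 0) -> p.@[A] = 0.
Proof.
move=> p_line0.
pose q : {poly K} := \sum_(m <- msupp p) (p@_m)%:P *
   \prod_i ((A i)%:P + (B i)%:P * 'X) ^+ m i.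
have qE t : q.[t] = p.@[fun k => A k + t * B k].
  rewrite mevalE /q horner_sum; apply: eq_bigr => m _.
  rewrite hornerM hornerC horner_prod; congr (_ * _); apply: eq_bigr => i _.
  by rewrite horner_exp hornerD hornerC hornerM hornerC hornerX mulrC.
(* In characteristic 0 the points 1, ..., size q are distinct roots of q. *)
have q0 : q = 0.
  apply: contraTeq isT => q_neq0.
  have roots : all (root q) [seq i.+1%:R | i <- iota 0 (size q)].
    by apply/allP => _ /mapP [i _ ->]; rewrite /root qE p_line0 ?pnatr_eq0.
  have uniq_pts : uniq [seq i.+1%:R : K | i <- iota 0 (size q)].
    by rewrite map_inj_uniq ?iota_uniq // => i j /eqP; rewrite eqr_nat => /eqP [].
  by have := max_poly_roots q_neq0 roots uniq_pts; rewrite size_map size_iota ltnn.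
have -> : p.@[A] = p.@[fun k => A k + 0 * B k] by apply: meval_eq => k; rewrite mul0r addr0.
by rewrite -qE q0 horner0.
Qed.

Lemma coords_add_scale (K : fieldType) d (v w : 'I_d -> 'rV[K]_3) (t : K) k :
  coords (fun s => v s + t *: w s) k = coords v k + t * coords w k.
Proof.
rewrite /coords; have -> : \matrix_(i < d, j < 3) (v i + t *: w i) 0 j =
   \matrix_(i < d, j < 3) v i 0 j + t *: \matrix_(i < d, j < 3) w i 0 j.
  by apply/matrixP => i j; rewrite !mxE.
by rewrite linearD linearZ /= !mxE.
Qed.

Section DepN.
Variables (d : nat) (l : {set 'I_d}).
Hypothesis l3 : #|l| = 3%N.

Lemma depNE (S : {set 'I_d}) : depN l S = [|| 3 < #|S|, l \subset S | 1 < #|S :\: l|]%N.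
Proof.
rewrite /depN -orbA; congr [|| _, _ | _]; apply/existsP/card_gt1P.
  by move=> [i /existsP [j /and3P [ij iS jS]]]; exists i, j.
by move=> [i [j [iS jS ij]]]; exists i; apply/existsP; exists j; rewrite ij iS jS.
Qed.

Lemma depN_small (S : {set 'I_d}) j : (#|S| <= 3)%N -> ~~ (l \subset S) ->
  S \subset l :|: [set j] -> ~~ depN l S.
Proof.
move=> S3 lS Slj; rewrite depNE !negb_or -!leqNgt S3 lS /=.
by rewrite -(cards1 j) subset_leq_card // subDset.
Qed.

Lemma not_subset_card_lt3 (S : {set 'I_d}) : (#|S| < 3)%N -> ~~ (l \subset S).
Proof. by rewrite -l3 => ltSl; apply: contraTN ltSl => /subset_leq_card; rewrite -leqNgt. Qed.

Lemma depN_self : depN l l.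
Proof. by rewrite depNE subxx orbT. Qed.

Lemma depN_set1 x : ~~ depN l [set x].
Proof.
by apply: (@depN_small _ x); rewrite ?not_subset_card_lt3 ?cards1 ?subsetUr.
Qed.

Lemma depN_set2 x y : x \in l -> y \in l -> ~~ depN l [set x; y].
Proof.
move=> xl yl; have S2 : (#|[set x; y]| <= 2)%N by rewrite cards2; case: (x != y).
apply: (@depN_small _ x); rewrite ?not_subset_card_lt3 ?(leq_trans S2) //.
by rewrite subUset !sub1set !inE xl yl.
Qed.

Lemma depN_set3 x y j : x \in l -> y \in l -> j \notin l -> ~~ depN l [set x; y; j].
Proof.
move=> xl yl jl; have S3 : (#|[set x; y; j]| <= 3)%N.
  by rewrite -setUA cardsU1 cards2; case: (_ \notin _); case: (y != j).
apply: (@depN_small _ j) => //; last by rewrite !subUset !sub1set !inE xl yl eqxx orbT.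
apply: contra jl => lS; suff -> : l = [set x; y; j] by rewrite !inE eqxx orbT.
by apply/eqP; rewrite eqEcard lS l3.
Qed.

Lemma depN_set2_out j k : j \notin l -> k \notin l -> j != k -> depN l [set j; k].
Proof.
move=> jl kl jk; rewrite depNE; apply/orP; right; apply/orP; right.
by apply/card_gt1P; exists j, k; rewrite !inE !eqxx ?orbT jl kl.
Qed.

Lemma realizationN_line_comb (K : fieldType) (h : 'I_d -> 'rV[K]_3) a b c :
  is_realization (depN l) h -> l = [set a; b; c] -> a != b -> a != c -> b != c ->
  exists al be, [/\ al != 0, be != 0 & h c = al *: h a + be *: h b].
Proof.
move=> h_real lE ab ac bc; apply: (realization_set3_comb h_real) => //.
  by rewrite -lE depN_self.
all: by apply: depN_set2; rewrite lE !inE eqxx ?orbT.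
Qed.

Lemma realizationN_off_line (K : fieldType) (h : 'I_d -> 'rV[K]_3) j0 :
  is_realization (depN l) h -> j0 \notin l ->
  exists mu : 'I_d -> K, forall s, s \notin l -> mu s != 0 /\ h s = mu s *: h j0.
Proof.
move=> h_real j0l.
have h_neq0 s : h s != 0 by apply/eqP => /lin_dep_set1 /h_real; apply/negP/depN_set1.
suff /fin_all_exists : forall s, exists mu : K, s \notin l -> mu != 0 /\ h s = mu *: h j0 by [].
move=> s; have [sl|sl] := boolP (s \in l); first by exists 0.
have [->|sj0] := eqVneq s j0; first by exists 1; rewrite scale1r oner_neq0.
have /h_real := depN_set2_out sl j0l sj0.
by case/(lin_dep_set2_scale sj0 (h_neq0 s) (h_neq0 j0)) => mu; exists mu.
Qed.
End DepN.

Lemma card_mrank d (I : {set 'I_d} -> bool) (S T : {set 'I_d}) :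
  T \subset S -> I T -> (#|T| <= mrank I S)%N.
Proof. by move=> TS IT; rewrite /mrank (bigD1 T) ?TS //= leq_maxl. Qed.

Section ThreePointLine.
Variables (d : nat) (indM : {set 'I_d} -> bool) (l : {set 'I_d}).
Hypotheses (M_config : pl_config_rank3 indM) (l_line : is_line indM l) (l3 : #|l| = 3%N).

Lemma set2_indep x y : indM [set x; y].
Proof. by case: M_config => _ M_simple _; apply: M_simple; rewrite cards2; case: (x != y). Qed.

Lemma line_dep : ~~ indM l.
Proof.
by case: l_line => _ rank_l _; apply/negP => /(card_mrank (subxx l)); rewrite rank_l l3.
Qed.

Lemma line_proper : exists j, j \notin l.
Proof.
case: M_config l_line => _ _ rankT [_ rank_l _]; apply/existsP; apply: contraT.
rewrite negb_exists => /forallP l_full; suff lT : l = setT by move: rankT; rewrite -lT rank_l.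
by apply/setP => x; rewrite inE; apply/negbNE.
Qed.

(* A dependent [{a, b, s}] would make [s |: l] a set of rank 2 strictly larger than
   the line [l]. *)
Lemma line_indep_add a b s : a \in l -> b \in l -> a != b -> s \notin l ->
  indM [set a; b; s].
Proof.
case: M_config l_line => -[_ _ M_aug] _ _ [_ _ l_max] al bl ab sl.
apply: contraT => abs_dep.
suff rank_sl : mrank indM (s |: l) = 2%N.
  have l_sl : (2 < #|s |: l|)%N by rewrite -l3 subset_leq_card ?subsetUr.
  by move: sl; rewrite -(l_max _ (subsetUr _ _) l_sl rank_sl) setU11.
apply/eqP; rewrite eqn_leq; apply/andP; split; last first.
  have <- : #|[set a; b]| = 2%N by rewrite cards2 ab.
  by rewrite card_mrank ?set2_indep // subUset !sub1set !inE al bl !orbT.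
rewrite /mrank; apply/bigmax_leqP => T /andP [T_sl T_ind]; rewrite leqNgt; apply/negP => T3.
have ab_lt : (#|[set a; b]| < #|T|)%N by rewrite cards2 ab.
have [x /setDP [xT xab] abx_ind] := M_aug _ _ (set2_indep a b) T_ind ab_lt.
move: (subsetP T_sl x xT); rewrite !inE => /orP [/eqP xs|xl].
  by move: abx_ind; rewrite xs setUC (negPf abs_dep).
suff abx_l : x |: [set a; b] = l by move: abx_ind; rewrite abx_l (negPf line_dep).
by apply/eqP; rewrite eqEcard !subUset !sub1set xl al bl l3 cardsU1 xab cards2 ab.
Qed.

Lemma realizationM_line_comb (K : fieldType) (gam : 'I_d -> 'rV[K]_3) a b c :
  is_realization (fun S => ~~ indM S) gam -> l = [set a; b; c] ->
  a != b -> a != c -> b != c ->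
  exists al be, [/\ al != 0, be != 0 & gam c = al *: gam a + be *: gam b].
Proof.
move=> gam_real lE ab ac bc; apply: (realization_set3_comb gam_real) => //.
- by rewrite -lE line_dep.
all: by rewrite negbK set2_indep.
Qed.
End ThreePointLine.

Lemma card3_set3 (T : finType) (A : {set T}) : #|A| = 3%N ->
  exists a b c, [/\ a != b, a != c, b != c & A = [set a; b; c]].
Proof.
move=> A3; have /card_gt2P [a [b [c [[aA bA cA] [ab bc ca]]]]] : (2 < #|A|)%N by rewrite A3.
exists a, b, c; split=> //; first by rewrite eq_sym.
apply/esym/eqP; rewrite eqEcard !subUset !sub1set aA bA cA A3 /=.
by rewrite -setUA cardsU1 cards2 !inE negb_or ab eq_sym ca bc.
Qed.

Lemma scale_eq_sym (K : fieldType) (k : K) (u v : 'rV[K]_3) : k != 0 -> u = k *: v ->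
  exists2 lam, lam != 0 & v = lam *: u.
Proof. by move=> k0 ->; exists k^-1; rewrite ?invr_eq0 ?scalerA ?mulVf ?scale1r. Qed.

Section Deformation.
Variables (K : fieldType) (d : nat) (dep : {set 'I_d} -> bool) (l : {set 'I_d}).
Variables (a b c j0 : 'I_d) (gam h : 'I_d -> 'rV[K]_3) (al be al' be' : K) (mu : 'I_d -> K).
Hypotheses (lE : l = [set a; b; c]) (ab : a != b) (j0l : j0 \notin l).
Hypotheses (al0 : al != 0) (be0 : be != 0) (al'0 : al' != 0) (be'0 : be' != 0).
Hypothesis gam_real : is_realization dep gam.
Hypothesis gam_c : gam c = al *: gam a + be *: gam b.
Hypothesis gam_off : forall s, s \notin l -> ~ lin_dep gam [set a; b; s].
Hypothesis h_c : h c = al' *: h a + be' *: h b.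
Hypothesis h_base : ~ lin_dep h [set a; b; j0].
Hypothesis h_off : forall s, s \notin l -> mu s != 0 /\ h s = mu s *: h j0.

Let off_neq s : s \notin l -> (a != s) * (b != s).
Proof. by move=> sl; split; apply: contraNneq sl => <-; rewrite lE !inE eqxx ?orbT. Qed.

Let B := mx3 (gam a) (gam b) (gam j0).
Let B_unit : B \in unitmx.
Proof. by have [aj0 bj0] := off_neq j0l; apply: lin_indep_mx3_unit => //; apply: gam_off. Qed.

Let coord s := gam s *m invmx B.
Let ua := (al' / al) *: h a.
Let ub := (be' / be) *: h b.

(* [T t] sends the frame [gam a, gam b, gam j0] to [t ua, t ub, h j0]; the scalings
   of [ua] and [ub] make it send [gam c] to [t *: h c]. *)
Let T t := invmx B *m mx3 (t *: ua) (t *: ub) (h j0).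

Definition deform_dir s : 'rV[K]_3 :=
  if s \in l then 0 else (mu s / coord s 0 2) *: (coord s 0 0 *: ua + coord s 0 1 *: ub).

Let T_unit t : t != 0 -> T t \in unitmx.
Proof.
move=> t0; have [aj0 bj0] := off_neq j0l.
rewrite unitmx_mul unitmx_inv B_unit; apply: mx3_unit => x y z.
rewrite /ua /ub !scalerA => /(lin_indep_set3 ab aj0 bj0 h_base) [/eqP + /eqP + ->].
rewrite !mulf_eq0 !invr_eq0 (negPf t0) (negPf al0) (negPf be0).
by rewrite (negPf al'0) (negPf be'0) !orbF => /eqP-> /eqP->.
Qed.

Let frame_T x y z t :
  (x *: gam a + y *: gam b + z *: gam j0) *m T t = x *: (t *: ua) + y *: (t *: ub) + z *: h j0.
Proof. exact: mx3_basis_map B_unit. Qed.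

Let deform_on_line t s : t != 0 -> s \in l ->
  exists2 lam, lam != 0 & h s + t *: deform_dir s = lam *: (gam s *m T t).
Proof.
move=> t0 sl; rewrite /deform_dir sl scaler0 addr0.
move: sl; rewrite lE !inE -orbA => /or3P [] /eqP->.
- apply: (@scale_eq_sym _ (t * (al' / al))); first by rewrite !mulf_neq0 ?invr_eq0.
  have := frame_T 1 0 0 t; rewrite !scale1r !scale0r !addr0 => ->.
  by rewrite /ua scalerA.
- apply: (@scale_eq_sym _ (t * (be' / be))); first by rewrite !mulf_neq0 ?invr_eq0.
  have := frame_T 0 1 0 t; rewrite !scale1r !scale0r !add0r !addr0 => ->.
  by rewrite /ub scalerA.
- apply: (@scale_eq_sym _ t) => //.
  rewrite gam_c -[_ + _]addr0 -(scale0r (gam j0)) frame_T scale0r addr0 h_c.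
  by rewrite /ua /ub scalerDr !scalerA; congr (_ *: _ + _ *: _); field.
Qed.

Let deform_off_line t s : t != 0 -> s \notin l ->
  exists2 lam, lam != 0 & h s + t *: deform_dir s = lam *: (gam s *m T t).
Proof.
move=> t0 sl; have [mu0 hs] := h_off sl; have [as_ bs] := off_neq sl.
have z0 : coord s 0 2 != 0.
  apply: contra_notN (gam_off sl) => /eqP z0; apply/lin_dep_set3 => //.
  exists (coord s 0 0), (coord s 0 1), (-1); split; first by right; right; rewrite oppr_eq0 oner_neq0.
  by rewrite {1}(mx3_coord (gam s) B_unit) -/B -/(coord s) z0 scale0r addr0 scaleN1r subrr.
apply: (@scale_eq_sym _ (coord s 0 2 / mu s)); first by rewrite mulf_neq0 ?invr_eq0.
rewrite {1}(mx3_coord (gam s) B_unit) -/B -/(coord s) frame_T /deform_dir (negPf sl) hs.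
rewrite !scalerDr !scalerA addrC.
by congr (_ *: _ + (_ *: _ + _ *: _)); field; rewrite ?mu0 ?z0 ?al0 ?be0.
Qed.

Lemma deform_realization t : t != 0 -> is_realization dep (fun s => h s + t *: deform_dir s).
Proof.
move=> t0; apply: (realization_mulmx (T_unit t0)) gam_real => s.
by have [/(deform_on_line t0)|/(deform_off_line t0)] := boolP (s \in l).
Qed.
End Deformation.

Theorem mainTheorem9 (R : realType) (d : nat) (indM : {set 'I_d} -> bool)
    (l : {set 'I_d}) :
  pl_config_rank3 indM ->
  (exists g : 'I_d -> 'rV[R[i]]_3, is_realization (fun S => ~~ indM S) g) ->
  is_line indM l -> #|l| = 3%N ->
  forall g : 'I_d -> 'rV[R[i]]_3,
    in_VN (depN l) g -> in_VN (fun S => ~~ indM S) g.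
Proof.
move=> M_config [gam gam_real] l_line l3 g g_VN p p_VM; apply: g_VN => h h_real.
have [a [b [c [ab ac bc lE]]]] := card3_set3 l3.
have a_l : a \in l by rewrite lE !inE eqxx.
have b_l : b \in l by rewrite lE !inE eqxx orbT.
have [j0 j0l] := line_proper M_config l_line.
have [al [be [al0 be0 gam_c]]] := realizationM_line_comb M_config l_line l3 gam_real lE ab ac bc.
have [al' [be' [al'0 be'0 h_c]]] := realizationN_line_comb l3 h_real lE ab ac bc.
have [mu h_off] := realizationN_off_line l3 h_real j0l.
have gam_off s : s \notin l -> ~ lin_dep gam [set a; b; s].
  by move=> sl /gam_real; rewrite (line_indep_add M_config l_line l3).
have h_base : ~ lin_dep h [set a; b; j0] by move/h_real; apply/negP/depN_set3.
pose w := deform_dir l a b j0 gam h al be al' be' mu.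
have w_real t : t != 0 -> is_realization (fun S => ~~ indM S) (fun s => h s + t *: w s).
  exact: (deform_realization lE ab j0l al0 be0 al'0 be'0 gam_real gam_c gam_off h_c h_base h_off).
apply: (meval_line_eq0 (B := coords w)) => t t0.
by rewrite -(p_VM _ (w_real t t0)); apply: meval_eq => k; rewrite coords_add_scale.
Qed.
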